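(* Write $\hat B_n(x)=\sum_{k=0}^n\hat B(n,k)x^k$ and set $\hat B(n,k)=0$ for $k<0$ or $k>n$. Then $\hat B(n,0)=S_n$ for $n\ge1$, and for all $n\ge1$ and all integers $k$, $$\hat B(n+1,k)=(n+1-k)\big(\hat B(n,k)+\hat B(n,k-2)\big)+k\big(\hat B(n,k+1)+\hat B(n,k-1)\big)+\hat B(n,k+1)+\hat B(n,k-2).$$
   Context: $\mathcal B_n$ is the set of signed permutations (bijections $\sigma$ of $\{\pm1,\dots,\pm n\}$ with $\sigma(-i)=-\sigma(i)$), written as words $\sigma(1)\cdots\sigma(n)$ with $\sigma(0)=0$. An index $i\in\{0\}\cup[n-1]$ is an alternating descent of $\sigma$ if either $\sigma(i)<\sigma(i+1)$ and $i$ is even, or $\sigma(i)>\sigma(i+1)$ and $i$ is odd; $\hat B_n(x)=\sum_{\sigma\in\mathcal B_n}x^{\hat d_B(\sigma)}$ with $\hat d_B(\sigma)$ the number of alternating descents. $S_n$ is the number of snakes: $\tau\in\mathcal B_n$ with $\tau(1)>\tau(2)<\tau(3)>\cdots$ and $\tau(1)>0$; its exponential generating function is $1+\sum_{n>0}S_nx^n/n!=1/(\cos x-\sin x)$. *)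

From mathcomp Require Import all_boot all_order all_algebra.
Set Implicit Arguments. Unset Strict Implicit. Unset Printing Implicit Defensive.
Import Order.TTheory GRing.Theory Num.Theory.
Local Open Scope ring_scope.

(* A signed permutation sigma of {+-1,...,+-n} is encoded by the finite function
   f : 'I_n -> 'I_n * bool with f i = (j, b) meaning
   sigma(i+1) = (-1)^b (j+1); sigma is a bijection with sigma(-i) = -sigma(i)
   exactly when i |-> (f i).1 is injective (hence bijective). *)
Definition signed_perms (n : nat) : {set {ffun 'I_n -> 'I_n * bool}} :=
  [set f : {ffun 'I_n -> 'I_n * bool} | injectiveb (fun i => (f i).1)].

(* The word of sigma: sigma(i) for i in {1..n}, with sigma(0) = 0
   (and 0 outside the range, never used). *)
Definition sval (n : nat) (f : {ffun 'I_n -> 'I_n * bool}) (i : nat) : int :=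
  match i with
  | 0%N => 0
  | j.+1 => match insub j : option 'I_n with
            | Some o => (-1) ^+ (f o).2 * ((f o).1.+1)%:Z
            | None => 0
            end
  end.

Definition is_altdes (n : nat) (f : {ffun 'I_n -> 'I_n * bool}) (i : nat) : bool :=
  ((sval f i < sval f i.+1) && ~~ odd i) || ((sval f i > sval f i.+1) && odd i).

Definition altdes (n : nat) (f : {ffun 'I_n -> 'I_n * bool}) : nat :=
  #|[set i : 'I_n | is_altdes f i]|.

(* hat B(n,k): number of signed permutations with k alternating descents,
   set to 0 for k < 0 (for k > n it is automatically 0). *)
Definition Bhat (n : nat) (k : int) : int :=
  match k with
  | Posz m => (#|[set f in signed_perms n | altdes f == m]|)%:Z
  | Negz _ => 0
  end.

Definition is_snake (n : nat) (f : {ffun 'I_n -> 'I_n * bool}) : bool :=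
  (0 < sval f 1) &&
  [forall i : 'I_n, (0 < i)%N ==>
     (if odd i then sval f i > sval f i.+1 else sval f i < sval f i.+1)].

Definition snakes (n : nat) : nat := #|[set f in signed_perms n | is_snake f]|.

(* Every signed permutation of [n+1] arises exactly once from a signed
   permutation s of [n] by inserting +-(n+1) at one of the n+1 positions and
   negating all the entries after it.  The negation compensates the parity shift
   of the later indices, so their alternating-descent status is unchanged.
   Inserting at a position i < n replaces the status of i by two equal statuses,
   a descent iff the sign of the new entry matches the parity of i; inserting at
   the end adds one such status.  Hence if s has d alternating descents, each of
   its d descents yields insertions with d - 1 and d + 1 alternating descents,
   each of its n - d other indices yields d and d + 2, and the end yields d and
   d + 1; collecting coefficients gives the recurrence.  Negating every entry
   complements the set of alternating descents, and snakes are exactly the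
   signed permutations all of whose indices are alternating descents, so
   B(n, 0) = S_n. *)

From Pilot Require Import Defs.
From mathcomp Require Import all_boot all_order all_algebra all_fingroup zify ring.
Import Order.TTheory GRing.Theory Num.Theory.
Local Open Scope ring_scope.
Set Implicit Arguments. Unset Strict Implicit. Unset Printing Implicit Defensive.
Local Notation sval := Pilot.Defs.sval.

Local Notation sperm n := {ffun 'I_n -> 'I_n * bool}.

Lemma sval_ord n (f : sperm n) (o : 'I_n) :
  sval f o.+1 = (-1) ^+ (f o).2 * ((f o).1.+1)%:Z.
Proof. by rewrite /= valK. Qed.

Lemma norm_sval_ord n (f : sperm n) (o : 'I_n) : `|sval f o.+1| = ((f o).1.+1)%:Z.
Proof. by rewrite sval_ord normrM normrX normrN normr1 expr1n mul1r. Qed.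

Lemma norm_sval_lt n (f : sperm n) m : `|sval f m| < n.+1%:Z.
Proof.
case: m => [|m]; first by rewrite normr0.
have [lt_mn|le_nm] := ltnP m n.
  by rewrite (norm_sval_ord f (Ordinal lt_mn)) ltz_nat ltnS.
by rewrite /= insubF ?normr0 // ltnNge le_nm.
Qed.

Lemma sval_neq n (f : sperm n) j :
  f \in signed_perms n -> (j < n)%N -> sval f j != sval f j.+1.
Proof.
rewrite inE => /injectiveP f_inj lt_jn; apply/eqP => /(congr1 Num.norm).
rewrite (norm_sval_ord f (Ordinal lt_jn)).
case: j lt_jn => [|j] lt_jn; first by rewrite normr0.
have lt_jn' : (j < n)%N by apply: ltnW.
rewrite (norm_sval_ord f (Ordinal lt_jn')) => -[/val_inj/f_inj/(congr1 val)] /=.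
by move=> /eqP; rewrite eqn_leq ltnn andbF.
Qed.

(* The word of [ins_max f i b] is
   s(1) ... s(i), (-1)^b (n+1), -s(i+1), ..., -s(n). *)
Definition ins_max n (f : sperm n) (i : 'I_n.+1) (b : bool) : sperm n.+1 :=
  [ffun j => if unlift i j is Some j' then
               (lift ord_max (f j').1, (f j').2 (+) (i <= j')%N)
             else (ord_max, b)].

Section InsertMax.
Variables (n : nat) (f : sperm n) (i : 'I_n.+1) (b : bool).
Local Notation g := (ins_max f i b).

Lemma ins_max_lift (o : 'I_n) :
  g (lift i o) = (lift ord_max (f o).1, (f o).2 (+) (i <= o)%N).
Proof. by rewrite ffunE liftK. Qed.

Lemma ins_max_at : g i = (ord_max, b).
Proof. by rewrite ffunE unlift_none. Qed.

Lemma sval_ins_max_lift (o : 'I_n) :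
  sval g (bump i o).+1 = (-1) ^+ (i <= o)%N * sval f o.+1.
Proof.
rewrite (sval_ord g (lift i o)) ins_max_lift sval_ord /= signr_addb.
by rewrite /bump [(n <= _)%N]leqNgt ltn_ord add0n mulrAC mulrC mulrA.
Qed.

Lemma sval_ins_max_at : sval g i.+1 = (-1) ^+ b * n.+1%:Z.
Proof. by rewrite sval_ord ins_max_at. Qed.

Lemma sval_ins_max_le m : (m <= i)%N -> sval g m = sval f m.
Proof.
case: m => [//|m] le_mi.
have lt_mn : (m < n)%N by have := ltn_ord i; lia.
have := sval_ins_max_lift (Ordinal lt_mn).
by rewrite /bump /= leqNgt le_mi add0n mul1r.
Qed.

Lemma sval_ins_max_gt m : (i < m <= n)%N -> sval g m.+1 = - sval f m.
Proof.
case: m => [//|m] /andP[lt_im lt_mn].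
have := sval_ins_max_lift (Ordinal lt_mn).
by rewrite /bump /= -ltnS lt_im add1n mulN1r.
Qed.

End InsertMax.

Definition alt (x y : int) (p : bool) := ((x < y) && ~~ p) || ((y < x) && p).

Lemma is_altdesE n (f : sperm n) j :
  is_altdes f j = alt (sval f j) (sval f j.+1) (odd j).
Proof. by []. Qed.

Lemma altE x y p : alt x y p = if p then y < x else x < y.
Proof. by case: p; rewrite /alt /= ?andbT ?andbF ?orbF. Qed.

Lemma alt_negb x y p : alt x y (~~ p) = alt y x p.
Proof. by rewrite /alt negbK orbC. Qed.

Lemma alt_oppr x y p : alt (- x) (- y) p = alt y x p.
Proof. by rewrite /alt !ltrN2. Qed.

Lemma negb_alt x y p : x != y -> ~~ alt x y p = alt y x p.
Proof. by rewrite /alt; case: ltgtP; case: p. Qed.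

Lemma alt_signr_r (x m : int) (b p : bool) :
  `|x| < m -> alt x ((-1) ^+ b * m) p = (b == p).
Proof.
rewrite ltr_norml => /andP[lt_mx lt_xm]; rewrite /alt.
by case: b; case: p; rewrite /= ?expr0 ?expr1 ?mul1r ?mulN1r ?lt_mx ?lt_xm
  ?(lt_gtF lt_mx) ?(lt_gtF lt_xm) ?andbF ?andbT ?orbF.
Qed.

Lemma alt_signr_l (x m : int) (b p : bool) :
  `|x| < m -> alt ((-1) ^+ b * m) x p = (b != p).
Proof. by move=> lt_xm; rewrite -alt_negb alt_signr_r //; case: b; case: p. Qed.

Lemma altdesE n (f : sperm n) : altdes f = (\sum_(0 <= j < n) is_altdes f j)%N.
Proof.
rewrite /altdes -sum1_card big_mkcond /= big_mkord.
by apply: eq_bigr => j _; rewrite inE; case: is_altdes.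
Qed.

Lemma altdes_le n (f : sperm n) : (altdes f <= n)%N.
Proof. by rewrite -[leqRHS]card_ord max_card. Qed.

Lemma big_nat_splice (F G : nat -> nat) n i : (i < n)%N ->
    (forall j, (j < i)%N -> G j = F j) ->
    (forall j, (i < j < n)%N -> G j.+1 = F j) ->
  (\sum_(0 <= j < n.+1) G j + F i = \sum_(0 <= j < n) F j + G i + G i.+1)%N.
Proof.
move=> lt_in eqGF_lt eqGF_gt.
rewrite (big_cat_nat _ (n := i)) ?leq0n 1?ltnW 1?ltnW //=.
rewrite [in RHS](big_cat_nat _ (n := i)) ?leq0n 1?ltnW //=.
rewrite (@big_ltn _ _ _ i n.+1) 1?ltnW // (@big_ltn _ _ _ i.+1 n.+1) //.
rewrite (@big_ltn _ _ _ i n) // (@big_add1 _ _ _ i.+1 n.+1) /=.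
rewrite (eq_big_nat _ _ (F1 := G) (F2 := F) (m := 0) (n := i)); last first.
  by move=> j /andP[_]; apply: eqGF_lt.
rewrite (eq_big_nat _ _ (F1 := fun j => G j.+1) (F2 := F) (m := i.+1) (n := n)) //.
lia.
Qed.

Section InsertMaxAltdes.
Variables (n : nat) (f : sperm n) (i : 'I_n.+1) (b : bool).
Local Notation g := (ins_max f i b).

Lemma is_altdes_ins_max_lt j : (j < i)%N -> is_altdes g j = is_altdes f j.
Proof. by move=> lt_ji; rewrite !is_altdesE !sval_ins_max_le // ltnW. Qed.

Lemma is_altdes_ins_max_at : is_altdes g i = (b == odd i).
Proof.
by rewrite is_altdesE sval_ins_max_at sval_ins_max_le // alt_signr_r ?norm_sval_lt.
Qed.

Lemma is_altdes_ins_max_succ : (i < n)%N -> is_altdes g i.+1 = (b == odd i).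
Proof.
move=> lt_in; rewrite is_altdesE sval_ins_max_at sval_ins_max_gt ?ltnSn ?lt_in //.
by rewrite alt_signr_l ?normrN ?norm_sval_lt //=; case: b; case: (odd i).
Qed.

Lemma is_altdes_ins_max_gt j : (i < j < n)%N -> is_altdes g j.+1 = is_altdes f j.
Proof.
case/andP=> lt_ij lt_jn; rewrite !is_altdesE.
rewrite !sval_ins_max_gt ?lt_ij ?(ltnW lt_jn) ?lt_jn ?(ltn_trans lt_ij) //.
by rewrite [odd _]/= alt_negb alt_oppr.
Qed.

Lemma altdes_ins_max_lt : (i < n)%N ->
  (altdes g + is_altdes f i = altdes f + 2 * (b == odd i))%N.
Proof.
move=> lt_in; rewrite !altdesE.
rewrite (@big_nat_splice (fun j => is_altdes f j) (fun j => is_altdes g j)) //.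
- by rewrite is_altdes_ins_max_at is_altdes_ins_max_succ // -addnA addnn -mul2n.
- by move=> j lt_ji; rewrite is_altdes_ins_max_lt.
- by move=> j ij; rewrite is_altdes_ins_max_gt.
Qed.

Lemma altdes_ins_max_last : i = n :> nat -> altdes g = (altdes f + (b == odd n))%N.
Proof.
move=> i_n; rewrite !altdesE big_nat_recr //=.
have := is_altdes_ins_max_at; rewrite i_n => ->.
congr (_ + _)%N; apply: eq_big_nat => j /andP[_ lt_jn].
by rewrite is_altdes_ins_max_lt ?i_n.
Qed.

End InsertMaxAltdes.

Section InsertMaxCount.
Variables (n : nat) (f : sperm n).
Local Notation d := (altdes f)%:Z.

Lemma sum_ins_max_lt (R : nmodType) (F : int -> R) (i : 'I_n) :
  \sum_(b : bool) F (altdes (ins_max f (widen_ord (leqnSn n) i) b))%:Z =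
  if is_altdes f i then F (d - 1) + F (d + 1) else F d + F (d + 2).
Proof.
have altdes_ins c : (altdes (ins_max f (widen_ord (leqnSn n) i) c))%:Z =
    if c == odd i then (if is_altdes f i then d + 1 else d + 2)
    else (if is_altdes f i then d - 1 else d).
  have := @altdes_ins_max_lt n f (widen_ord (leqnSn n) i) c (ltn_ord i).
  by case: (c == odd i); case: (is_altdes f i) => /=; lia.
by rewrite big_bool !altdes_ins; case: (is_altdes f i); case: (odd i); rewrite //= addrC.
Qed.

Lemma sum_ins_max_last (R : nmodType) (F : int -> R) :
  \sum_(b : bool) F (altdes (ins_max f ord_max b))%:Z = F d + F (d + 1).
Proof.
rewrite big_bool !altdes_ins_max_last // !PoszD.
by case: (odd n); rewrite /= addr0 // addrC.
Qed.

Lemma sum_ins_max (R : nmodType) (F : int -> R) :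
  \sum_(i : 'I_n.+1) \sum_(b : bool) F (altdes (ins_max f i b))%:Z =
  (F (d - 1) + F (d + 1)) *+ altdes f + (F d + F (d + 2)) *+ (n - altdes f)
  + (F d + F (d + 1)).
Proof.
rewrite big_ord_recr /= sum_ins_max_last; congr (_ + _).
under eq_bigr do rewrite sum_ins_max_lt.
have card_altdes : #|(fun j : 'I_n => is_altdes f j)| = altdes f.
  by rewrite /altdes cardsE.
have card_not_altdes : #|(fun j : 'I_n => ~~ is_altdes f j)| = (n - altdes f)%N.
  rewrite -card_altdes -[X in (X - _)%N](card_ord n).
  by rewrite -(cardC (fun j : 'I_n => is_altdes f j)) addKn.
by rewrite big_if !sumr_const card_altdes card_not_altdes.
Qed.

End InsertMaxCount.

Definition sperm_of_pair n (x : {perm 'I_n} * {ffun 'I_n -> bool}) : sperm n :=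
  [ffun i => (x.1 i, x.2 i)].

Lemma sperm_of_pair_inj n : injective (@sperm_of_pair n).
Proof.
move=> [p s] [p' s'] /ffunP eq_ps; congr (_, _).
  by apply/permP => i; have := eq_ps i; rewrite !ffunE => -[].
by apply/ffunP => i; have := eq_ps i; rewrite !ffunE => -[].
Qed.

Lemma signed_permsE n : signed_perms n = [set sperm_of_pair x | x in setT].
Proof.
apply/setP => f; apply/idP/imsetP => [|[x _ ->]].
  rewrite inE => /injectiveP f_inj.
  exists (perm f_inj, [ffun i => (f i).2]); first by rewrite inE.
  by apply/ffunP => i; rewrite !ffunE permE /=; case: (f i).
by rewrite inE; apply/injectiveP => i j; rewrite !ffunE /=; apply: perm_inj.
Qed.

Lemma card_signed_perms n : #|signed_perms n| = (n`! * 2 ^ n)%N.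
Proof.
rewrite signed_permsE card_imset; last exact: sperm_of_pair_inj.
by rewrite cardsT card_prod card_Sn card_ffun card_bool card_ord.
Qed.

Lemma ins_max_signed_perm n (f : sperm n) i b :
  f \in signed_perms n -> ins_max f i b \in signed_perms n.+1.
Proof.
rewrite !inE => /injectiveP f_inj; apply/injectiveP => j1 j2.
rewrite !ffunE; case: unliftP => [o1 ->|->]; case: unliftP => [o2 ->|->] //=.
- by move/lift_inj/f_inj ->.
- by move/eqP; rewrite lift_eqF.
- by move/eqP; rewrite eq_liftF.
Qed.

Lemma ins_max_eq_max n (f : sperm n) i b j : ((ins_max f i b j).1 == ord_max) = (j == i).
Proof.
rewrite ffunE; case: unliftP => [o ->|->]; last by rewrite !eqxx.
by rewrite /= !lift_eqF.
Qed.

Lemma ins_max_inj n :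
  injective (fun x : sperm n * ('I_n.+1 * bool) => ins_max x.1 x.2.1 x.2.2).
Proof.
move=> [f [i b]] [f' [i' b']] /= eq_ins.
have eq_i : i = i'.
  by apply/eqP; rewrite -(ins_max_eq_max f' i' b') -eq_ins (ins_max_at f i b).
subst i'.
have eq_b : b = b'.
  by have := ins_max_at f' i b'; rewrite -eq_ins (ins_max_at f i b) => -[].
subst b'; congr (_, _); apply/ffunP => o.
have := ins_max_lift f' i b o; rewrite -eq_ins ins_max_lift => -[eq1 eq2].
apply: injective_projections; last exact: addIb eq2.
exact: val_inj (can_inj (bumpK n) eq1).
Qed.

Lemma signed_perms_succ n :
  signed_perms n.+1 = [set ins_max x.1 x.2.1 x.2.2 | x in setX (signed_perms n) setT].
Proof.
apply/esym/eqP; rewrite eqEcard; apply/andP; split.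
  apply/subsetP => g /imsetP [x]; rewrite inE => /andP[f_sp _] ->.
  exact: ins_max_signed_perm.
rewrite card_imset; last exact: ins_max_inj.
rewrite cardsX !card_signed_perms cardsT card_prod card_ord card_bool factS expnS.
by nia.
Qed.

Lemma sum_signed_perms_succ (R : nmodType) n (F : sperm n.+1 -> R) :
  \sum_(g in signed_perms n.+1) F g =
  \sum_(f in signed_perms n) \sum_(i : 'I_n.+1) \sum_(b : bool) F (ins_max f i b).
Proof.
rewrite signed_perms_succ big_imset /=; last by move=> x y _ _; apply: ins_max_inj.
rewrite (eq_bigl (fun x => (x.1 \in signed_perms n) && true)); last first.
  by move=> x; rewrite !inE andbT.
rewrite -(pair_big (mem (signed_perms n)) xpredT (fun f y => F (ins_max f y.1 y.2))).
by apply: eq_bigr => f _; rewrite pair_bigA.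
Qed.

Lemma BhatE n k :
  Bhat n k = \sum_(f in signed_perms n) ((altdes f)%:Z == k)%:R.
Proof.
case: k => [m|m] /=; last by rewrite big1.
rewrite -sum1_card -natz natr_sum big_mkcond [RHS]big_mkcond /=.
by apply: eq_bigr => f _; rewrite inE eqz_nat; case: (_ \in _); case: (_ == m).
Qed.

Lemma indicator_recurrence (n : nat) (d k : int) :
  ((d - 1 == k)%:R + (d + 1 == k)%:R) * d
  + ((d == k)%:R + (d + 2 == k)%:R) * (n%:Z - d) + ((d == k)%:R + (d + 1 == k)%:R)
  = (n.+1%:Z - k) * ((d == k)%:R + (d == k - 2)%:R)
    + k * ((d == k + 1)%:R + (d == k - 1)%:R) + (d == k + 1)%:R + (d == k - 2)%:R
  :> int.
Proof.
have addr_eq (x c : int) : (x + c == k) = (x == k - c).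
  by rewrite [x == _]eq_sym subr_eq eq_sym.
have indicator_mul y : (d == y)%:R * d = (d == y)%:R * y :> int.
  by case: eqP => [->|]; rewrite ?mul0r.
rewrite subr_eq !addr_eq !mulrDl !mulrBr !indicator_mul.
ring.
Qed.

Lemma count_ins_max n (f : sperm n) k :
  \sum_(i : 'I_n.+1) \sum_(b : bool) ((altdes (ins_max f i b))%:Z == k)%:R =
  let d := (altdes f)%:Z in
  (n.+1%:Z - k) * ((d == k)%:R + (d == k - 2)%:R)
  + k * ((d == k + 1)%:R + (d == k - 1)%:R) + (d == k + 1)%:R + (d == k - 2)%:R :> int.
Proof.
rewrite (sum_ins_max f (fun x => (x == k)%:R)).
rewrite -[_ *+ altdes f]mulr_natr -[_ *+ (n - _)]mulr_natr natrB ?altdes_le //.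
rewrite (natz n) (natz (altdes f)).
exact: indicator_recurrence.
Qed.

Lemma Bhat_succ n k :
  Bhat n.+1 k =
    (n.+1%:Z - k) * (Bhat n k + Bhat n (k - 2))
    + k * (Bhat n (k + 1) + Bhat n (k - 1))
    + Bhat n (k + 1) + Bhat n (k - 2).
Proof.
rewrite BhatE sum_signed_perms_succ.
under eq_bigr do rewrite count_ins_max.
by rewrite !BhatE !big_split /= -!mulr_sumr !big_split.
Qed.

Definition opp_sperm n (f : sperm n) : sperm n := [ffun i => ((f i).1, ~~ (f i).2)].

Lemma opp_spermK n : involutive (@opp_sperm n).
Proof. by move=> f; apply/ffunP => i; rewrite !ffunE /= negbK; case: (f i). Qed.

Lemma sval_opp_sperm n (f : sperm n) m : sval (opp_sperm f) m = - sval f m.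
Proof.
case: m => [|m] /=; first by rewrite oppr0.
by case: insubP => [o _ _|_]; rewrite ?oppr0 // ffunE /= signrN mulNr.
Qed.

Lemma opp_sperm_signed n (f : sperm n) :
  (opp_sperm f \in signed_perms n) = (f \in signed_perms n).
Proof.
rewrite !inE; apply/injectiveP/injectiveP => f_inj i j eq_ij; apply: f_inj.
  by rewrite !ffunE.
by move: eq_ij; rewrite !ffunE.
Qed.

Lemma is_altdes_opp_sperm n (f : sperm n) j : f \in signed_perms n -> (j < n)%N ->
  is_altdes (opp_sperm f) j = ~~ is_altdes f j.
Proof.
by move=> f_sp lt_jn; rewrite !is_altdesE !sval_opp_sperm alt_oppr negb_alt ?sval_neq.
Qed.

Lemma is_snake_all_altdes n (f : sperm n) : (0 < n)%N ->
  is_snake f = [forall j : 'I_n, is_altdes f j].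
Proof.
move=> n_gt0; rewrite /is_snake.
apply/andP/forallP => [[f1_pos /forallP snake_f] j | altdes_f].
  rewrite is_altdesE altE; case: (posnP j) => [-> // | j_gt0].
  exact: implyP (snake_f j) j_gt0.
split; first by have := altdes_f (Ordinal n_gt0); rewrite is_altdesE altE.
by apply/forallP => j; apply/implyP => _; have := altdes_f j; rewrite is_altdesE altE.
Qed.

Lemma altdes_eq0 n (f : sperm n) :
  (altdes f == 0%N) = [forall j : 'I_n, ~~ is_altdes f j].
Proof.
rewrite /altdes cards_eq0; apply/eqP/forallP => [A0 j | notA].
  by have := in_set0 j; rewrite -A0 inE => ->.
by apply/setP => j; rewrite !inE; apply: negbTE.
Qed.

Lemma Bhat0_snakes n : (0 < n)%N -> Bhat n 0 = (snakes n)%:Z.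
Proof.
move=> n_gt0; rewrite /snakes /=; congr Posz.
rewrite -(card_preimset _ (can_inj (@opp_spermK n))); apply: eq_card => f.
rewrite in_set [in LHS]in_set [in RHS]in_set opp_sperm_signed.
by apply: andb_id2l => f_sp; rewrite is_snake_all_altdes // altdes_eq0;
  apply: eq_forallb => j; rewrite is_altdes_opp_sperm ?negbK.
Qed.

Theorem proposition3p2 :
  forall n : nat, (1 <= n)%N ->
    Bhat n 0 = (snakes n)%:Z /\
    forall k : int,
      Bhat n.+1 k =
        (n.+1%:Z - k) * (Bhat n k + Bhat n (k - 2))
        + k * (Bhat n (k + 1) + Bhat n (k - 1))
        + Bhat n (k + 1) + Bhat n (k - 2).
Proof.
move=> n n_gt0; split; [exact: Bhat0_snakes | exact: Bhat_succ].
Qed.
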